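(* Let $n\in\mathbb{N}_+$, $i\in\{0,\dots,n\}$ and let $l$ be a positive integer. Then $$\|B_n^l e_{i+1}\|_1=\begin{cases}\Big(\sum_{j=0}^{i}\binom{n}{j}\Big)^l & \text{if } i\le\lfloor n/2\rfloor,\\[4pt] \Big(\sum_{j=0}^{\lfloor n/2\rfloor}\binom{n}{j}\Big)^l+l\sum_{s=\lfloor n/2\rfloor+1}^{i}\Big(\sum_{j=0}^{n-s}\binom{n}{j}\Big)^{l-1}\binom{n}{n-s} & \text{if } i>\lfloor n/2\rfloor,\end{cases}$$ where $e_{i+1}\in\mathbb{R}^{n+1}$ is the $(i+1)$-th standard unit vector.
   Context: $V$ denotes sequences $(v_j)_{j\in\mathbb{N}}$ (indexed from $0$) of nonnegative integers with finite sum; ${\rm e}_k\in V$ has $({\rm e}_k)_j=\delta_{kj}$. For $i^*\in\mathbb{N}$, the clipping $\mathrm{cl}_{i^*}:V\to V$ is $\mathrm{cl}_{i^*}(v)_i=v_i$ for $i<i^*$, $\sum_{j\ge i^*}v_j$ for $i=i^*$, $0$ for $i>i^*$. For $n\in\mathbb{N}_+$ and $k\in\{0,\dots,n\}$ let $\gamma_{k,n}=\sum_{j=0}^{k}\binom{n}{j}{\rm e}_{n-j}\in V$. The binomial bound matrix $B_n\in\mathbb{N}^{(n+1)\times(n+1)}$ is defined by $(B_n)_{a,b}=(\mathrm{cl}_{b-1}(\gamma_{b-1,n}))_{a-1}$ for $a,b\in\{1,\dots,n+1\}$. $\|\cdot\|_1$ is the sum of absolute values of entries. *)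

From mathcomp Require Import all_boot all_order all_algebra.
Set Implicit Arguments. Unset Strict Implicit. Unset Printing Implicit Defensive.
Import Order.TTheory GRing.Theory Num.Theory.

(* Elements of V (finitely supported nat sequences) are represented by a
   finite list s : seq nat, with v_j = nth 0 s j (zero beyond size s). *)
Definition Vcoef (s : seq nat) (j : nat) : nat := nth 0%N s j.

Definition Ve (k : nat) : seq nat := rcons (nseq k 0%N) 1%N.

Definition clip (istar : nat) (s : seq nat) : seq nat :=
  mkseq (fun i => if (i < istar)%N then Vcoef s i
                  else \sum_(istar <= j < size s) Vcoef s j) istar.+1.

Definition gamma (k n : nat) : seq nat :=
  mkseq (fun p => \sum_(j < k.+1) 'C(n, j) * Vcoef (Ve (n - j)) p)%N n.+1.

(* Binomial bound matrix, 0-indexed: (B_n)_{a,b} = cl_b(gamma_{b,n})_a *)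
Definition Bmat (n : nat) : 'M[int]_(n.+1) :=
  \matrix_(a < n.+1, b < n.+1) Posz (Vcoef (clip b (gamma b n)) a).

Definition norm1 (m : nat) (v : 'cV[int]_m) : int := (\sum_(a < m) `|v a 0|)%R.

From mathcomp Require Import all_boot all_order all_algebra.
From mathcomp Require Import zify ring.
Import Order.TTheory GRing.Theory Num.Theory.
Set Implicit Arguments. Unset Strict Implicit. Unset Printing Implicit Defensive.

(* Write S_k = sum_(j <= k) C(n, j).  B_n is upper triangular.  For 2b <= n its
   column b is S_b e_b, so e_b is an eigenvector.  For b > n/2 the diagonal
   entry of column b is S_(n-b), and
     B_n (e_b - e_(b-1)) = S_(n-b) (e_b - e_(b-1)) + C(n, b) e_(n-b),
   where e_(n-b) is an eigenvector for the same eigenvalue S_(n-b).  This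
   Jordan chain gives B_n^l (e_b - e_(b-1)) = S_(n-b)^l (e_b - e_(b-1))
   + l S_(n-b)^(l-1) C(n, b) e_(n-b), whose entry sum is l S_(n-b)^(l-1) C(n, b);
   telescoping from b = n/2 yields the formula.  All entries are nonnegative, so
   the l1 norm is the entry sum. *)

Definition binom_prefix n k := \sum_(j < k.+1) 'C(n, j).

Lemma binom_prefixS n k : binom_prefix n k.+1 = binom_prefix n k + 'C(n, k.+1).
Proof. by rewrite /binom_prefix big_ord_recr. Qed.

Lemma sum_binom_top n b : b <= n -> \sum_(n - b <= p < n.+1) 'C(n, p) = binom_prefix n b.
Proof.
elim: b => [|b IHb] le_bn; first by rewrite subn0 big_nat1 /binom_prefix big_ord1 binn bin0.
rewrite binom_prefixS -IHb 1?ltnW // big_ltn; last by lia.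
have -> : (n - b.+1).+1 = n - b by lia.
by rewrite addnC bin_sub.
Qed.

Definition gamma_coef n b p := if n - p <= b then 'C(n, p) else 0.

Lemma gamma_coefS n b p :
  gamma_coef n b.+1 p = gamma_coef n b p + (n - p == b.+1) * 'C(n, p).
Proof.
rewrite /gamma_coef; case: (ltngtP (n - p) b.+1) => [lt_b1 | gt_b1 | ->].
- by rewrite -ltnS lt_b1 addn0.
- by rewrite leqNgt (ltn_trans _ gt_b1).
- by rewrite ltnn mul1n.
Qed.

Lemma nth_Ve k p : nth 0 (Ve k) p = (p == k).
Proof.
rewrite /Ve nth_rcons size_nseq nth_nseq.
by case: ltngtP => //; rewrite if_same.
Qed.

Lemma gammaE n b p : b <= n -> p <= n -> Vcoef (gamma b n) p = gamma_coef n b p.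
Proof.
move=> le_bn le_pn; rewrite /Vcoef /gamma nth_mkseq ?ltnS // /gamma_coef.
under eq_bigr => j _ do rewrite /Vcoef nth_Ve.
have hitE (j : 'I_b.+1) : (p == n - j) = (j == n - p :> nat).
  by apply/eqP/eqP; have := ltn_ord j; lia.
case: leqP => [le_npb | lt_bnp].
- rewrite (bigD1 (inord (n - p))) //= hitE inordK ?ltnS // eqxx muln1 bin_sub //.
  rewrite big1 ?addn0 // => j ne_j; rewrite hitE.
  case: eqP => [j_hit | _]; last by rewrite muln0.
  by move: ne_j; rewrite -j_hit inord_val eqxx.
- by rewrite big1 // => j _; rewrite hitE; case: eqP => //; have := ltn_ord j; lia.
Qed.

Lemma sum_gamma_coef n b : b <= n ->
  \sum_(b <= p < n.+1) gamma_coef n b p = binom_prefix n (minn b (n - b)).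
Proof.
move=> le_bn; rewrite -sum_binom_top; last by lia.
rewrite (big_cat_nat _ (n := n - minn b (n - b))) /=; try lia.
rewrite big1_seq ?add0n => [|p]; last first.
  by rewrite mem_index_iota /gamma_coef => /andP [le_bp lt_p_mid]; case: leqP => //; lia.
by apply: eq_big_nat => p bound_p; rewrite /gamma_coef; case: leqP => //; lia.
Qed.

Lemma Bmat_entry n (a b : 'I_n.+1) : Bmat n a b =
  Posz (if a < b then gamma_coef n b a
        else if a == b :> nat then binom_prefix n (minn b (n - b)) else 0).
Proof.
have [le_an le_bn] : a <= n /\ b <= n by split; rewrite -ltnS.
rewrite mxE /clip /Vcoef; case: ltngtP => [lt_ab | lt_ba | <-].
- by rewrite nth_mkseq ?lt_ab -/(Vcoef _ _) ?gammaE //; lia.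
- by rewrite nth_default // size_mkseq.
- rewrite nth_mkseq // ltnn size_mkseq -sum_gamma_coef //.
  by congr Posz; apply: eq_big_nat => p bound_p; apply: gammaE; lia.
Qed.

Lemma binom_prefix_diag n k : n < 2 * k.+1 -> k < n ->
  'C(n, k) + binom_prefix n (n - k.+1)
  = binom_prefix n (minn k (n - k)) + (k == n - k.+1) * 'C(n, k.+1).
Proof.
move=> lt_n_2k2 lt_kn; have [n_odd | n_even] := eqVneq n (2 * k).+1.
- have -> : minn k (n - k) = n - k.+1 by lia.
  have mirror_k : n - k.+1 = k by lia.
  have sym_k : 'C(n, k) = 'C(n, k.+1) by rewrite -[in LHS]mirror_k bin_sub.
  by rewrite mirror_k eqxx mul1n addnC sym_k.
- have -> : minn k (n - k) = (n - k.+1).+1 by lia.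
  rewrite binom_prefixS; have -> : (n - k.+1).+1 = n - k by lia.
  have -> : (k == n - k.+1) = false by apply/eqP; lia.
  by rewrite bin_sub 1?ltnW // mul0n addn0 addnC.
Qed.

Section MatrixPowers.
Local Open Scope ring_scope.
Variables (R : comNzRingType) (m : nat) (M : 'M[R]_m.+1).

Lemma mxpow_eigen (v : 'cV_m.+1) c :
  M *m v = c *: v -> forall l, M ^+ l *m v = c ^+ l *: v.
Proof.
move=> Mv; elim=> [|l IHl]; first by rewrite !expr0 mul1mx scale1r.
by rewrite exprSr -mulmxE -mulmxA Mv -scalemxAr IHl scalerA exprSr mulrC.
Qed.

Lemma mxpow_jordan (u w : 'cV_m.+1) c d :
  M *m u = c *: u + d *: w -> M *m w = c *: w ->
  forall l, M ^+ l *m u = c ^+ l *: u + (l%:R * c ^+ l.-1 * d) *: w.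
Proof.
move=> Mu Mw; elim=> [|l IHl].
  by rewrite !expr0 mul1mx scale1r !mul0r scale0r addr0.
rewrite exprSr -mulmxE -mulmxA Mu mulmxDr -!scalemxAr IHl (mxpow_eigen Mw).
rewrite scalerDr !scalerA -addrA -scalerDl exprSr [c ^+ l * c]mulrC.
congr (_ + _ *: _); case: l {IHl} => [|l] /=; first by rewrite !expr0; ring.
by rewrite exprS; ring.
Qed.

End MatrixPowers.

Section ColumnVectors.
Local Open Scope ring_scope.

Lemma mxpow_mul_ge0 (R : numDomainType) m (M : 'M[R]_m.+1) (v : 'cV_m.+1) :
  (forall a b, 0 <= M a b) -> (forall a, 0 <= v a 0) ->
  forall l a, 0 <= (M ^+ l *m v) a 0.
Proof.
move=> M_ge0 v_ge0; elim=> [|l IHl] a; first by rewrite expr0 mul1mx.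
rewrite exprS -mulmxE -mulmxA mxE; apply: sumr_ge0 => b _.
exact: mulr_ge0.
Qed.

Definition colsum (R : nmodType) m (v : 'cV[R]_m) := \sum_a v a 0.

Lemma colsumD (R : nmodType) m (u v : 'cV[R]_m) : colsum (u + v) = colsum u + colsum v.
Proof. by rewrite /colsum -big_split; apply: eq_bigr => a _; rewrite mxE. Qed.

Lemma colsumB (R : zmodType) m (u v : 'cV[R]_m) : colsum (u - v) = colsum u - colsum v.
Proof. by rewrite /colsum -sumrB; apply: eq_bigr => a _; rewrite !mxE. Qed.

Lemma colsumZ (R : pzSemiRingType) m c (v : 'cV[R]_m) : colsum (c *: v) = c * colsum v.
Proof. by rewrite /colsum mulr_sumr; apply: eq_bigr => a _; rewrite mxE. Qed.

Lemma colsum_delta (R : pzSemiRingType) m (i : 'I_m) : colsum (delta_mx i 0 : 'cV[R]_m) = 1.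
Proof.
rewrite /colsum (bigD1 i) //= big1 ?addr0 => [|a ne_ai]; rewrite mxE ?eqxx //.
by rewrite (negbTE ne_ai).
Qed.

Lemma norm1_colsum m (v : 'cV[int]_m) : (forall a, 0 <= v a 0) -> norm1 v = colsum v.
Proof. by move=> v_ge0; apply: eq_bigr => a _; rewrite ger0_norm. Qed.

End ColumnVectors.

Section BinomialBoundMatrix.
Local Open Scope ring_scope.
Variable n : nat.
Local Notation e k := (delta_mx (inord k) 0 : 'cV[int]_n.+1).

Lemma eq_inord (a : 'I_n.+1) k : (k <= n)%N -> (a == inord k) = (a == k :> nat).
Proof. by move=> le_kn; rewrite -val_eqE /= inordK. Qed.

Lemma Bmat_mul_delta (a : 'I_n.+1) k : (k <= n)%N -> (Bmat n *m e k) a 0 = Bmat n a (inord k).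
Proof. by rewrite -colE mxE. Qed.

Lemma Bmat_eigen k : (2 * k <= n)%N -> Bmat n *m e k = (binom_prefix n k)%:Z *: e k.
Proof.
move=> le_2k_n; apply/matrixP => a j; rewrite (ord1 j) Bmat_mul_delta; last by lia.
rewrite Bmat_entry !mxE eq_inord ?inordK; try lia.
rewrite eqxx andbT; case: (ltngtP a k) => [lt_ak | lt_ka | _]; rewrite ?mulr0 ?mulr1 //.
- by rewrite /gamma_coef; case: leqP => //; lia.
- by congr Posz; congr binom_prefix; lia.
Qed.

Lemma Bmat_jordan k : (n < 2 * k.+1)%N -> (k < n)%N ->
  Bmat n *m (e k.+1 - e k)
  = (binom_prefix n (n - k.+1))%:Z *: (e k.+1 - e k) + ('C(n, k.+1))%:Z *: e (n - k.+1).
Proof.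
move=> lt_n_2k2 lt_kn; apply/matrixP => a j.
have entryB (u v : 'cV[int]_n.+1) : (u - v) a 0 = u a 0 - v a 0 by rewrite !mxE.
rewrite (ord1 j) mulmxBr entryB !Bmat_mul_delta; try lia.
rewrite !Bmat_entry !mxE !eq_inord ?inordK; try lia.
rewrite !eqxx !andbT.
have [lt_ak | gt_ak | eq_ak] := ltngtP a k.
- have -> : (a < k.+1)%N by lia.
  have -> : (a == k.+1 :> nat) = false by apply/eqP; lia.
  rewrite gamma_coefS PoszD addrAC subrr add0r subrr mulr0 add0r.
  have [a_hit | a_miss] := eqVneq (a : nat) (n - k.+1)%N.
  + by rewrite a_hit subKn // eqxx mul1n mulr1 bin_sub.
  + have -> : (n - a == k.+1)%N = false by apply/eqP; lia.
    by rewrite mul0n mulr0.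
- have [lt_a_k1 | gt_a_k1 | eq_a_k1] := ltngtP a k.+1; first by lia.
  + have -> : (a == n - k.+1 :> nat)%N = false by apply/eqP; lia.
    by rewrite !subrr !mulr0.
  + have -> : (a == n - k.+1 :> nat)%N = false by apply/eqP; lia.
    by rewrite subr0 subr0 mulr1 mulr0 addr0; congr Posz; congr binom_prefix; lia.
- rewrite eq_ak ltnSn ltn_eqF // /gamma_coef.
  have -> : (n - k <= k.+1)%N by lia.
  have := congr1 Posz (binom_prefix_diag lt_n_2k2 lt_kn); rewrite !PoszD PoszM.
  by case: eqP => _; rewrite ?mulr1 ?mulr0 /=; lia.
Qed.

Lemma colsum_Bpow_low l k : (2 * k <= n)%N ->
  colsum (Bmat n ^+ l *m e k) = (binom_prefix n k ^ l)%N.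
Proof.
move=> le_2k_n; rewrite (mxpow_eigen (Bmat_eigen le_2k_n)) colsumZ colsum_delta.
by rewrite mulr1 -[RHS]natz natrX natz.
Qed.

Lemma colsum_Bpow_step l k : (n < 2 * k.+1)%N -> (k < n)%N ->
  colsum (Bmat n ^+ l *m e k.+1) = colsum (Bmat n ^+ l *m e k)
    + (l * binom_prefix n (n - k.+1) ^ (l - 1) * 'C(n, n - k.+1))%N.
Proof.
move=> lt_n_2k2 lt_kn; have le_mirror : (2 * (n - k.+1) <= n)%N by lia.
rewrite -[LHS](subrK (colsum (Bmat n ^+ l *m e k))) addrC; congr (_ + _).
rewrite -colsumB -mulmxBr (mxpow_jordan (Bmat_jordan lt_n_2k2 lt_kn) (Bmat_eigen le_mirror)).
rewrite colsumD !colsumZ colsumB !colsum_delta subrr mulr0 add0r mulr1.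
by rewrite bin_sub // subn1 -!natz -natrX -!natrM.
Qed.

Lemma colsum_Bpow_high l d : (n./2 + d <= n)%N ->
  colsum (Bmat n ^+ l *m e (n./2 + d))
  = (binom_prefix n n./2 ^ l + l * \sum_((n./2).+1 <= s < (n./2 + d).+1)
                                   binom_prefix n (n - s) ^ (l - 1) * 'C(n, n - s))%N.
Proof.
elim: d => [|d IHd] le_n.
  by rewrite addn0 colsum_Bpow_low ?big_geq ?muln0 ?addn0 //; lia.
rewrite addnS colsum_Bpow_step ?IHd; try lia.
by rewrite [in RHS]big_nat_recr ?mulnDr ?addnA ?mulnA ?PoszD //; lia.
Qed.

End BinomialBoundMatrix.

Theorem mainTheorem10 (n : nat) (i : 'I_n.+1) (l : nat) :
  (0 < n)%N -> (0 < l)%N ->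
  norm1 ((Bmat n ^+ l)%R *m (delta_mx i 0%R : 'cV[int]_(n.+1))) =
  Posz ((if (i <= n./2)%N then (\sum_(j < i.+1) 'C(n, j)) ^ l
   else (\sum_(j < (n./2).+1) 'C(n, j)) ^ l
        + l * \sum_((n./2).+1 <= s < i.+1)
                 (\sum_(j < (n - s).+1) 'C(n, j)) ^ (l - 1) * 'C(n, n - s))%N).
Proof.
(* The formula also holds for n = 0 and for l = 0. *)
move=> _ _.
rewrite norm1_colsum; last first.
  by apply: mxpow_mul_ge0 => [a b | a]; rewrite mxE.
rewrite -[X in delta_mx X]inord_val.
have le_in : i <= n by rewrite -ltnS.
case: ifP => [le_i_half | gt_i_half]; first by rewrite colsum_Bpow_low //; lia.
have -> : nat_of_ord i = n./2 + (i - n./2) by lia.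
by rewrite colsum_Bpow_high //; lia.
Qed.
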